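(* In the setting described in the context, let $\mathbf{w}:\mathcal{K}(\mathbb{R}^n)\to\mathbb{R}$ be a bounded function satisfying $\mathbf{w}(X)-\mathbf{w}(F(X))=\xi(X)\,(1-\mathbf{w}(F(X)))$ for all $X\in\mathcal{K}(\mathbb{R}^n)$, where $\xi(X):=1-\exp(-\Psi(X))$, and such that $\lim_{k\to\infty}\mathbf{w}(\mathcal{R}(X,k))=0$ for every $X\in\mathcal{K}_{\mathcal{D}_{\mathcal{A}}}(\mathbb{R}^n)$. Then $\mathbf{w}=\mathcal{W}$ on $\mathcal{K}(\mathbb{R}^n)$.
   Context: Let $\|\cdot\|$ be a norm on $\mathbb{R}^n$ and $\mathrm{dist}(x,\Omega):=\inf_{y\in\Omega}\|x-y\|$. Let $\mathcal{K}(\mathbb{R}^n)$ denote the nonempty compact subsets of $\mathbb{R}^n$. Consider $x_{k+1}=f(x_k,u_k)$ with $f:\mathbb{R}^n\times\mathbb{R}^m\to\mathbb{R}^n$ continuous and inputs $u_k\in U$, $U\subset\mathbb{R}^m$ nonempty compact. Define $F(X):=\{f(x,u):x\in X,u\in U\}$. For $x\in\mathbb{R}^n$ and $\pi:\mathbb{Z}_+\to U$, $\varphi_x^\pi(0)=x$, $\varphi_x^\pi(k+1)=f(\varphi_x^\pi(k),\pi(k))$; $\mathcal{R}(X,k):=\{\varphi_x^\pi(k):x\in X,\pi\in U^{\mathbb{Z}_+}\}$. Let $\mathcal{A}\in\mathcal{K}(\mathbb{R}^n)$ be controlled invariant. Assume local $\ell_p$-stabilizability: there exist $r>0$, $M\ge1$,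 $p>0$, $\lambda:[0,r]\times\mathbb{Z}_+\to\mathbb{R}_+$ such that (1) for each $k$, $s\mapsto\lambda(s,k)$ is continuous, nondecreasing, $\lambda(0,k)=0$; for each $s$, $k\mapsto\lambda(s,k)$ is nonincreasing, $\lambda(s,0)\le s$; (2) $\sum_{k}\lambda(r,k)^p<\infty$; (3) for every $x$ with $\mathrm{dist}(x,\mathcal{A})\le r$ there is $\pi\in U^{\mathbb{Z}_+}$ with $\mathrm{dist}(\varphi_x^\pi(k),\mathcal{A})\le M\lambda(\mathrm{dist}(x,\mathcal{A}),k)$ for all $k$. Let $\mathcal{D}_{\mathcal{A}}:=\{x:\exists\pi\in U^{\mathbb{Z}_+},\ \lim_{k\to\infty}\mathrm{dist}(\varphi_x^\pi(k),\mathcal{A})=0\}$ and $\mathcal{K}_{\mathcal{D}_{\mathcal{A}}}(\mathbb{R}^n):=\{X\in\mathcal{K}(\mathbb{R}^n):X\cap\mathcal{D}_{\mathcal{A}}\neq\emptyset\}$. Let $\alpha:\mathbb{R}^n\to\mathbb{R}_+$ be continuous with $\underline{\alpha}\,\mathrm{dist}(x,\mathcal{A})^{\bar p}\le\alpha(x)\le\overline{\alpha}\,\mathrm{dist}(x,\mathcal{A})^{\bar p}$, constants $\underline{\alpha},\overline{\alpha}>0$, $\bar p\ge p$. Define $\Psi(X):=\inf_{y\in X}\alpha(y)$, $\mathcal{V}(X):=\sum_{k=0}^\infty\Psi(\mathcal{R}(X,k))\in[0,\infty]$, and $\mathcal{W}(X):=1-\exp(-\mathcal{V}(X))$ with the convention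 $\exp(-\infty)=0$. *)

From HB Require Import structures.
From mathcomp Require Import all_boot all_order all_algebra.
From mathcomp Require Import all_classical all_reals all_analysis.
Set Implicit Arguments. Unset Strict Implicit. Unset Printing Implicit Defensive.
Import Order.TTheory GRing.Theory Num.Theory.
Import numFieldNormedType.Exports.
Local Open Scope classical_set_scope.
Local Open Scope ring_scope.

Section Defs.
Variables (R : realType) (n m : nat).
Local Notation V := 'rV[R]_n.
Local Notation Ui := 'rV[R]_m.

Definition is_norm (nrm : V -> R) : Prop :=
  [/\ forall x, nrm x = 0 -> x = 0,
      forall (a : R) x, nrm (a *: x) = `|a| * nrm x &
      forall x y, nrm (x + y) <= nrm x + nrm y].

Definition dist (nrm : V -> R) (x : V) (Om : set V) : R :=
  inf [set nrm (x - y) | y in Om].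

Definition Kset (X : set V) : Prop := compact X /\ X !=set0.

Definition Fimg (f : V -> Ui -> V) (U : set Ui) (X : set V) : set V :=
  [set z | exists x, exists u, [/\ X x, U u & z = f x u]].

Definition admissible (U : set Ui) (pi : nat -> Ui) : Prop := forall k, U (pi k).

Fixpoint traj (f : V -> Ui -> V) (x : V) (pi : nat -> Ui) (k : nat) : V :=
  match k with
  | 0%N => x
  | k'.+1 => f (traj f x pi k') (pi k')
  end.

Definition Reach (f : V -> Ui -> V) (U : set Ui) (X : set V) (k : nat) : set V :=
  [set z | exists x, exists pi, [/\ X x, admissible U pi & z = traj f x pi k]].

Definition controlled_invariant (f : V -> Ui -> V) (U : set Ui) (A : set V) : Prop :=
  forall x, A x -> exists u, U u /\ A (f x u).

Definition local_lp_stabilizable (nrm : V -> R) (f : V -> Ui -> V) (U : set Ui)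
  (A : set V) (p : R) : Prop :=
  exists (r M : R) (lam : R -> nat -> R),
     0 < r /\ 1 <= M /\ 0 < p /\
     (forall s k, 0 <= s <= r -> 0 <= lam s k) /\
     (forall k, {within `[0, r], continuous (fun s => lam s k)}) /\
     (forall k s t, 0 <= s -> s <= t -> t <= r -> lam s k <= lam t k) /\
     (forall k, lam 0 k = 0) /\
     (forall s k l, 0 <= s <= r -> (k <= l)%N -> lam s l <= lam s k) /\
     (forall s, 0 <= s <= r -> lam s 0%N <= s) /\
     (\sum_(0 <= k <oo) ((lam r k) `^ p)%:E < +oo)%E /\
     (forall x, dist nrm x A <= r ->
        exists pi, admissible U pi /\
          forall k, dist nrm (traj f x pi k) A <= M * lam (dist nrm x A) k).

Definition DA (nrm : V -> R) (f : V -> Ui -> V) (U : set Ui) (A : set V) : set V :=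
  [set x | exists pi, admissible U pi /\
     (fun k => dist nrm (traj f x pi k) A) @ \oo --> (0 : R)].

Definition Psi (alpha : V -> R) (X : set V) : R := inf [set alpha y | y in X].

Definition xi (alpha : V -> R) (X : set V) : R := 1 - expR (- Psi alpha X).

Definition Vfun (alpha : V -> R) (f : V -> Ui -> V) (U : set Ui) (X : set V) : \bar R :=
  (\sum_(0 <= k <oo) (Psi alpha (Reach f U X k))%:E)%E.

(* W(X) = 1 - exp(-V(X)), with exp(-oo) = 0 *)
Definition Wfun (alpha : V -> R) (f : V -> Ui -> V) (U : set Ui) (X : set V) : R :=
  match Vfun alpha f U X with
  | EFin v => 1 - expR (- v)
  | _ => 1
  end.

End Defs.

From HB Require Import structures.
From mathcomp Require Import all_boot all_order all_algebra.
From mathcomp Require Import all_classical all_reals all_analysis.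
From mathcomp Require Import ring.
Set Implicit Arguments. Unset Strict Implicit. Unset Printing Implicit Defensive.
Import Order.TTheory GRing.Theory Num.Theory.
Import numFieldNormedType.Exports.
Local Open Scope classical_set_scope.
Local Open Scope ring_scope.

(* Write S_k for the k-th partial sum of Psi(R(X,j)).  The recursion for w
   telescopes along the reachable sets to 1 - w X = exp(-S_k) (1 - w(R(X,k))),
   and exp(-S_k) tends to 1 - W X.  If X meets D_A, then w(R(X,k)) -> 0 and the
   identity passes to the limit.  Otherwise no reachable point comes r-close to A,
   because stabilizability puts the r-neighbourhood of A inside D_A; so
   Psi(R(X,k)) >= lo r^pbar, S_k -> +oo, W X = 1, and the boundedness of w forces
   1 - w X = 0. *)

Section Reachability.
Variables (R : realType) (n m : nat).
Variables (f : 'rV[R]_n -> 'rV[R]_m -> 'rV[R]_n) (U : set 'rV[R]_m).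
Hypothesis f_cont : continuous (fun xu : 'rV[R]_n * 'rV[R]_m => f xu.1 xu.2).
Hypothesis U_compact : compact U.
Hypothesis U_neq0 : U !=set0.

Lemma eq_traj x pi pi' k : (forall j, (j < k)%N -> pi j = pi' j) ->
  traj f x pi k = traj f x pi' k.
Proof.
elim: k => [//|k IHk] eq_pi /=.
rewrite IHk => [|j /ltnW]; last exact: eq_pi.
by rewrite eq_pi.
Qed.

Lemma traj_cat x pi pi' k j :
  traj f x (fun i => if (i < k)%N then pi i else pi' (i - k)%N) (j + k) =
  traj f (traj f x pi k) pi' j.
Proof.
elim: j => [|j IHj]; first by rewrite add0n; apply: eq_traj => i ->.
by rewrite addSn /= IHj ltnNge leq_addl addnK.
Qed.

Lemma Reach0 X : Reach f U X 0 = X.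
Proof.
have [u0 Uu0] := U_neq0.
apply/seteqP; split=> [z [x [pi [Xx _ ->]]] // | z Xz].
by exists z, (fun=> u0); split.
Qed.

Lemma ReachS X k : Reach f U X k.+1 = Fimg f U (Reach f U X k).
Proof.
apply/seteqP; split=> z.
  move=> [x [pi [Xx adm ->]]].
  by exists (traj f x pi k), (pi k); split=> //; exists x, pi.
move=> [_ [u [[x [pi [Xx adm ->]]] Uu ->]]].
exists x, (fun j => if j == k then u else pi j); split=> //.
  by move=> j; case: ifP.
rewrite /= eqxx; congr f; apply: eq_traj => j jk.
by rewrite (ltn_eqF jk).
Qed.

Lemma Kset_Fimg X : Kset X -> Kset (Fimg f U X).
Proof.
move=> [X_compact [x0 Xx0]]; have [u0 Uu0] := U_neq0.
have -> : Fimg f U X = (fun xu => f xu.1 xu.2) @` (X `*` U).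
  apply/seteqP; split=> [z [x [u [Xx Uu ->]]] | _ [[x u] [Xx Uu] <-]].
    by exists (x, u).
  by exists x, u.
split; last by exists (f x0 u0), (x0, u0).
apply: continuous_compact; last exact: compact_setX.
exact: continuous_subspaceT.
Qed.

Lemma Kset_Reach X k : Kset X -> Kset (Reach f U X k).
Proof.
move=> KX; elim: k => [|k IHk]; first by rewrite Reach0.
by rewrite ReachS; exact: Kset_Fimg.
Qed.

End Reachability.

Section Distance.
Variables (R : realType) (n : nat) (nrm : 'rV[R]_n -> R).
Hypothesis nrm_norm : is_norm nrm.

Lemma is_norm_ge0 x : 0 <= nrm x.
Proof.
have [_ nrmZ nrmD] := nrm_norm.
have nrm0 : nrm 0 = 0 by rewrite -(scale0r 0) nrmZ normr0 mul0r.
have := nrmD x (- x); rewrite subrr nrm0 -scaleN1r nrmZ normrN normr1 mul1r.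
by rewrite -mulr2n pmulrn_lge0.
Qed.

Lemma dist_ge0 x Om : 0 <= dist nrm x Om.
Proof.
have [[y Omy]|/nonemptyPn->] := pselect (Om !=set0); last by rewrite /dist image_set0 inf0.
apply: lb_le_inf; first by exists (nrm (x - y)), y.
by move=> _ [z _ <-]; exact: is_norm_ge0.
Qed.

End Distance.

Lemma le_Psi (R : realType) n (alpha : 'rV[R]_n -> R) X c :
  X !=set0 -> (forall y, X y -> c <= alpha y) -> c <= Psi alpha X.
Proof.
move=> [y Xy] c_le; apply: lb_le_inf; first by exists (alpha y), y.
by move=> _ [z Xz <-]; exact: c_le.
Qed.

Section Series.
Variable R : realType.

Lemma summable_powR_cvg0 (u : R^nat) (p : R) : 0 < p -> (forall k, 0 <= u k) ->
  (\sum_(0 <= k <oo) (u k `^ p)%:E < +oo)%E -> u @ \oo --> 0.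
Proof.
move=> p0 u0 sum_fin.
have /cvg_series_cvg_0 up0 : cvgn (series (fun k => u k `^ p)).
  by apply: nnseries_is_cvg => // k; exact: powR_ge0.
apply/cvgr0Pnorm_lt => e e0; near=> k.
rewrite ger0_norm // ltNge; apply/negP => ek.
have : `|u k `^ p| < e `^ p.
  by near: k; apply: (cvgr0Pnorm_lt _).1 up0 _ (powR_gt0 _ e0).
rewrite ger0_norm ?powR_ge0 // ltNge => /negP; apply.
by apply: ge0_ler_powR; rewrite ?nnegrE ?u0 // ltW.
Unshelve. all: by end_near.
Qed.

Lemma cvg_expR_Nseries (u : R^nat) : (forall k, 0 <= u k) ->
  expR (- \sum_(0 <= j < k) u j) @[k --> \oo] -->
  (if (\sum_(0 <= k <oo) (u k)%:E)%E is v%:E then expR (- v) else 0).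
Proof.
move=> u0.
have u0e k : (0 <= (u k)%:E)%E by rewrite lee_fin.
have cvgS : (\sum_(0 <= j < k) u j)%:E @[k --> \oo] --> (\sum_(0 <= k <oo) (u k)%:E)%E.
  by under eq_fun do rewrite -sumEFin; exact: is_cvg_nneseries.
have S0 : (0 <= \sum_(0 <= k <oo) (u k)%:E)%E by apply: nneseries_ge0.
move: cvgS S0; case: (\sum_(0 <= k <oo) (u k)%:E)%E => [v||//] cvgS _.
- have /fine_cvgP[_ Sv] := cvgS.
  by apply: continuous_cvg; [exact: continuous_expR | exact: cvgN].
- have /cvgeryP Sy := cvgS.
  exact: (cvg_comp _ _ Sy (@cvgr_expR R)).
Qed.

Lemma partial_sum_cvgy (u : R^nat) (c : R) : 0 < c -> (forall k, c <= u k) ->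
  \sum_(0 <= j < k) u j @[k --> \oo] --> +oo.
Proof.
move=> c0 c_le; apply/cvgryPge => a; near=> k.
apply: (@le_trans _ _ (\sum_(0 <= j < k) c)); last exact: ler_sum_nat.
rewrite sumr_const_nat subn0 -mulr_natl -ler_pdivrMr //.
by near: k; exact: cvgry_ge cvgr_idn _.
Unshelve. all: by end_near.
Qed.

Lemma cvg0_mul_bounded (a b : R^nat) (B : R) : a @ \oo --> 0 ->
  (forall k, `|b k| <= B) -> a k * b k @[k --> \oo] --> 0.
Proof.
move=> a0 b_le; apply: norm_cvg0.
apply: (@squeeze_cvgr _ _ _ _ (fun=> 0) (fun k => `|a k| * B)).
- by near=> k; rewrite normr_ge0 normrM ler_wpM2l.
- exact: cvg_cst.
- rewrite -(mul0r B) -(@normr0 _ R); apply: cvgM; [exact: cvg_norm | exact: cvg_cst].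
Unshelve. all: by end_near.
Qed.

End Series.

Section Attraction.
Variables (R : realType) (n m : nat) (nrm : 'rV[R]_n -> R).
Variables (f : 'rV[R]_n -> 'rV[R]_m -> 'rV[R]_n) (U : set 'rV[R]_m) (A : set 'rV[R]_n).

Lemma DA_traj x pi k : admissible U pi ->
  DA nrm f U A (traj f x pi k) -> DA nrm f U A x.
Proof.
move=> adm [pi' [adm' cvg_pi']].
exists (fun i => if (i < k)%N then pi i else pi' (i - k)%N); split.
  by move=> i; case: ifP.
by rewrite -(cvg_shiftn k); under eq_fun do rewrite traj_cat.
Qed.

Lemma stabilizable_DA_nbhs p : is_norm nrm -> local_lp_stabilizable nrm f U A p ->
  exists2 r, 0 < r & forall y, dist nrm y A <= r -> DA nrm f U A y.
Proof.
move=> nrm_norm [r [M [lam [r0 [M1 [p0 [lam_ge0 [_ [lam_mono [_ [_ [_ [lam_sum stab]]]]]]]]]]]]].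
have lam_r0 : lam r @ \oo --> 0.
  by apply: summable_powR_cvg0 p0 _ lam_sum => k; apply: lam_ge0; rewrite lexx ltW.
exists r => // y dyr; have [pi [adm dist_le]] := stab y dyr.
exists pi; split=> //.
apply: (@squeeze_cvgr _ _ _ _ (fun=> 0) (fun k => M * lam r k)); last 2 first.
- exact: cvg_cst.
- by rewrite -(mulr0 M); apply: cvgM => //; exact: cvg_cst.
near=> k; rewrite dist_ge0 //=; apply: le_trans (dist_le k) _.
apply: ler_wpM2l; first exact: le_trans ler01 M1.
by apply: lam_mono; rewrite ?dist_ge0.
Unshelve. all: by end_near.
Qed.

End Attraction.

Section ValueFunction.
Variables (R : realType) (n m : nat) (nrm : 'rV[R]_n -> R).
Variables (f : 'rV[R]_n -> 'rV[R]_m -> 'rV[R]_n) (U : set 'rV[R]_m) (A : set 'rV[R]_n).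
Variables (alpha : 'rV[R]_n -> R) (w : set 'rV[R]_n -> R).
Hypothesis f_cont : continuous (fun xu : 'rV[R]_n * 'rV[R]_m => f xu.1 xu.2).
Hypothesis U_compact : compact U.
Hypothesis U_neq0 : U !=set0.

Lemma one_sub_Wfun X :
  1 - Wfun alpha f U X = if Vfun alpha f U X is v%:E then expR (- v) else 0.
Proof. by rewrite /Wfun; case: Vfun => [v||]; rewrite ?subrr // subKr. Qed.

Lemma Psi_Reach_ge X k (lo pbar r : R) : Kset X -> 0 <= lo -> 0 <= pbar -> 0 < r ->
  (forall x, lo * dist nrm x A `^ pbar <= alpha x) ->
  (forall y, dist nrm y A <= r -> DA nrm f U A y) ->
  ~ (X `&` DA nrm f U A !=set0) ->
  lo * r `^ pbar <= Psi alpha (Reach f U X k).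
Proof.
move=> KX lo0 pbar0 r0 alpha_lb DA_nbhs noDA.
apply: le_Psi => [|_ [x [pi [Xx adm ->]]]].
  exact: (Kset_Reach f_cont U_compact U_neq0 k KX).2.
have r_lt : r < dist nrm (traj f x pi k) A.
  rewrite ltNge; apply/negP => /DA_nbhs DA_traj_x.
  by apply: noDA; exists x; split=> //; exact: DA_traj adm DA_traj_x.
apply: le_trans (alpha_lb _); apply: ler_wpM2l => //.
apply: ge0_ler_powR; rewrite ?nnegrE ?(ltW r0) ?(ltW r_lt) //.
exact: ltW (lt_trans r0 r_lt).
Qed.

Hypothesis w_rec : forall X, Kset X ->
  w X - w (Fimg f U X) = xi alpha X * (1 - w (Fimg f U X)).

Lemma one_sub_w_Reach X k : Kset X ->
  1 - w X = expR (- \sum_(0 <= j < k) Psi alpha (Reach f U X j)) * (1 - w (Reach f U X k)).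
Proof.
move=> KX; elim: k => [|k IHk]; first by rewrite big_geq // oppr0 expR0 mul1r Reach0.
have step : 1 - w (Reach f U X k) =
    expR (- Psi alpha (Reach f U X k)) * (1 - w (Reach f U X k.+1)).
  have := w_rec (Kset_Reach f_cont U_compact U_neq0 k KX); rewrite -ReachS /xi => rec.
  by rewrite -[w (Reach f U X k)](subrK (w (Reach f U X k.+1))) rec; ring.
by rewrite IHk step big_nat_recr //= opprD expRD mulrA.
Qed.

End ValueFunction.

Theorem theorem14 (R : realType) (n m : nat)
  (nrm : 'rV[R]_n -> R) (f : 'rV[R]_n -> 'rV[R]_m -> 'rV[R]_n)
  (U : set 'rV[R]_m) (A : set 'rV[R]_n)
  (alpha : 'rV[R]_n -> R) (p lo hi pbar : R)
  (w : set 'rV[R]_n -> R) :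
  is_norm nrm ->
  continuous (fun xu : 'rV[R]_n * 'rV[R]_m => f xu.1 xu.2) ->
  compact U -> U !=set0 ->
  Kset A ->
  controlled_invariant f U A ->
  local_lp_stabilizable nrm f U A p ->
  continuous alpha ->
  0 < lo -> 0 < hi -> p <= pbar ->
  (forall x, 0 <= alpha x) ->
  (forall x, lo * (dist nrm x A) `^ pbar <= alpha x /\
             alpha x <= hi * (dist nrm x A) `^ pbar) ->
  (exists B : R, forall X, Kset X -> `|w X| <= B) ->
  (forall X, Kset X ->
     w X - w (Fimg f U X) = xi alpha X * (1 - w (Fimg f U X))) ->
  (forall X, Kset X -> X `&` DA nrm f U A !=set0 ->
     (fun k => w (Reach f U X k)) @ \oo --> (0 : R)) ->
  forall X, Kset X -> w X = Wfun alpha f U X.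
Proof.
move=> nrm_norm f_cont U_compact U_neq0 _ _ stab _ lo0 _ p_pbar alpha_ge0 alpha_bnd
  [B w_bnd] w_rec w_lim X KX.
have [r r0 DA_nbhs] := stabilizable_DA_nbhs nrm_norm stab.
have KR k := Kset_Reach f_cont U_compact U_neq0 k KX.
pose P k := Psi alpha (Reach f U X k).
have P_ge0 k : 0 <= P k by apply: le_Psi => [|y _]; [exact: (KR k).2 | exact: alpha_ge0].
have e_cvg : expR (- \sum_(0 <= j < k) P j) @[k --> \oo] --> 1 - Wfun alpha f U X.
  by rewrite one_sub_Wfun; exact: cvg_expR_Nseries.
suff w_cvg : (fun=> 1 - w X) @ \oo --> 1 - Wfun alpha f U X.
  have one_sub_eq : 1 - w X = 1 - Wfun alpha f U X :=
    cvg_unique (@Rhausdorff R) (cvg_cst (1 - w X)) w_cvg.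
  by rewrite -(subKr 1 (w X)) one_sub_eq subKr.
rewrite (eq_cvg _ _ (fun k => one_sub_w_Reach f_cont U_compact U_neq0 w_rec k KX)).
have [DAX | noDAX] := pselect (X `&` DA nrm f U A !=set0).
  rewrite -[1 - Wfun _ _ _ _]mulr1 -[X in _ * X](subr0 1).
  by apply: cvgM e_cvg _; apply: cvgB (w_lim X KX DAX); exact: cvg_cst.
have pbar_ge0 : 0 <= pbar.
  by case: stab => [_ [_ [_ [_ [_ [p0 _]]]]]]; exact: le_trans (ltW p0) p_pbar.
have c0 : 0 < lo * r `^ pbar by rewrite mulr_gt0 // powR_gt0.
have P_ge k : lo * r `^ pbar <= P k.
  by apply: Psi_Reach_ge (ltW lo0) pbar_ge0 r0 _ DA_nbhs noDAX => // x; case: (alpha_bnd x).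
have e0 : expR (- \sum_(0 <= j < k) P j) @[k --> \oo] --> 0.
  exact: cvg_comp (partial_sum_cvgy c0 P_ge) (@cvgr_expR R).
rewrite (cvg_unique (@Rhausdorff R) e_cvg e0).
apply: (@cvg0_mul_bounded _ _ _ (1 + B) e0) => k.
by apply: le_trans (ler_normB _ _) _; rewrite normr1 lerD2l w_bnd ?KR.
Qed.
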